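(* Let $q>2$ be a prime power. In $\mathrm{PG}(2,q^2)$ there exists a semioval $\mathcal{S}\subset\mathcal{H}_q$ of size $k$ for every integer $k$ satisfying $q^3+1\geq k\geq\frac{q^3+2q^2-q+2}{2}$ if $q$ is odd, and $q^3+1\geq k\geq\frac{q^3+3q^2-2q+2}{2}$ if $q$ is even.
   Context: $\mathrm{PG}(2,q^2)$ is the Desarguesian projective plane over $\mathbb{F}_{q^2}$. $\mathcal{H}_q$ denotes the Hermitian curve, the set of points of $\mathrm{PG}(2,q^2)$ satisfying $X_2X_0^q+X_2^qX_0+X_1^{q+1}=0$ (it has $q^3+1$ points). A semioval is a non-empty pointset $\mathcal{S}$ such that for every $P\in\mathcal{S}$ there is a unique line $t_P$ with $\mathcal{S}\cap t_P=\{P\}$. *)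

From HB Require Import structures.
From mathcomp Require Import all_boot all_order all_algebra.
Set Implicit Arguments. Unset Strict Implicit. Unset Printing Implicit Defensive.
Import GRing.Theory.
Local Open Scope ring_scope.

Definition prime_power (q : nat) : Prop :=
  exists p n : nat, prime p /\ (0 < n)%N /\ q = (p ^ n)%N.

Section PG2.
Variable F : finFieldType.

(* Normalized homogeneous coordinates: first nonzero coordinate equals 1.
   This picks a unique representative of each point of PG(2,F). *)
Definition pnorm (v : F * F * F) : bool :=
  let: (a, b, c) := v in
  if a != 0 then a == 1 else if b != 0 then b == 1 else c == 1.

Definition point := {v : F * F * F | pnorm v}.
Definition line := {v : F * F * F | pnorm v}.

Definition incident (P : point) (l : line) : bool :=
  let: (x0, x1, x2) := val P in
  let: (a0, a1, a2) := val l in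
  a0 * x0 + a1 * x1 + a2 * x2 == 0.

Definition line_pts (l : line) : {set point} := [set P | incident P l].

Definition hermitian_curve (q : nat) : {set point} :=
  [set P : point | let: (x0, x1, x2) := val P in
     x2 * x0 ^+ q + x2 ^+ q * x0 + x1 ^+ q.+1 == 0].

Definition semioval (S : {set point}) : Prop :=
  S != set0 /\
  forall P, P \in S -> exists! l : line, S :&: line_pts l = [set P].

End PG2.

From mathcomp Require Import all_boot all_order all_algebra all_field zify ring.
Set Implicit Arguments. Unset Strict Implicit. Unset Printing Implicit Defensive.
Import GRing.Theory.

(* Write frob x = x^q, qtrace y = y + y^q and qnorm x = x^(q+1): the affine part of H_q is
   qtrace y + qnorm x = 0, and (0:0:1) is its only point at infinity.  Let S be a subset of
   H_q which contains, with each affine point P, a second point on the vertical line through P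
   (or which contains (0:0:1) and meets every vertical line).  Then the only candidate for t_P
   is the tangent to H_q at P: any other line y = a + b x through P meets H_q in the points
   whose abscissa lies on the "circle" qnorm (x + b^q) = qnorm (x_P + b^q), which has q + 1
   points.  Hence if every point removed from H_q lies above a set W of abscissae meeting each
   circle in at most q - 1 points, what is left is a semioval.  W = qtrace^-1(L) with
   #|L| = (q-1)/2 works, because a circle meets each fibre of qtrace in at most two points;
   removing whole vertical lines above W, plus at most q - 2 points from each of two more,
   realises every size down to the stated bound. *)

Lemma card_fibers (T U : finType) (f : T -> U) (X : {set T}) (B : {set U}) :
  {in X, forall x, f x \in B} ->
  #|X| = \sum_(b in B) #|[set x in X | f x == b]|.
Proof.
move=> fXB; rewrite -sum1_card (partition_big f (mem B)) //=.
by apply: eq_bigr => b _; rewrite -sum1_card; apply: eq_bigl => x; rewrite !inE.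
Qed.

Lemma uniform_fibers (T U : finType) (f : T -> U) (X : {set T}) (B : {set U}) m n :
  0 < m -> {in X, forall x, f x \in B} ->
  {in B, forall b, #|[set x in X | f x == b]| <= m} -> #|B| <= n -> #|X| = n * m ->
  #|B| = n /\ {in B, forall b, #|[set x in X | f x == b]| = m}.
Proof.
move=> m_gt0 fXB fibre_le B_le cardX.
have [sum_le sum_eq] := leqif_sum (fun b (bB : b \in B) => leqif_eq (fibre_le b bB)).
rewrite -card_fibers // sum_nat_const in sum_le sum_eq.
have cardB : #|B| = n.
  apply/eqP; rewrite -(eqn_pmul2r m_gt0) eqn_leq leq_mul2r B_le orbT /=.
  by rewrite -cardX.
split=> // b bB; apply/eqP.
by move: sum_eq; rewrite cardB cardX eqxx => /esym/forall_inP; apply.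
Qed.

Lemma exists_subset_card (T : finType) (Y : {set T}) n :
  n <= #|Y| -> exists2 X : {set T}, X \subset Y & #|X| = n.
Proof.
move=> n_le; exists [set x in take n (enum Y)].
  by apply/subsetP=> x; rewrite inE => /mem_take; rewrite mem_enum.
rewrite cardsE; have /card_uniqP -> : uniq (take n (enum Y)) by rewrite take_uniq ?enum_uniq.
by rewrite size_take -cardE; case: ltngtP n_le.
Qed.

Lemma exists_neq (T : finType) (A : {set T}) x :
  1 < #|A| -> exists2 y, y \in A & y != x.
Proof.
rewrite (cardsD1 x) => A_gt1; have /card_gt0P[y] : 0 < #|A :\ x|.
  by move: A_gt1; case: (x \in A) => /=; lia.
by rewrite !inE => /andP[y_neq y_A]; exists y.
Qed.

Lemma cardsU_disjoint (T : finType) (A B : {set T}) :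
  {in A, forall x, x \notin B} -> #|A :|: B| = #|A| + #|B|.
Proof.
move=> AnotB; rewrite cardsU disjoint_setI0 ?cards0 ?subn0 //.
by rewrite -setI_eq0; apply/set0Pn => -[x /setIP[/AnotB/negP]].
Qed.

Local Open Scope ring_scope.

Lemma card_roots_lt_size (R : fieldType) (T : finType) (f : T -> R) (P : pred T)
    (p : {poly R}) :
  injective f -> p != 0 -> (forall x, P x -> root p (f x)) ->
  (#|[set x | P x]| < size p)%N.
Proof.
move=> f_inj p_neq0 rootP.
have -> : #|[set x | P x]| = size (map f (enum [set x | P x])) by rewrite size_map cardE.
apply: max_poly_roots => //.
  by apply/allP=> y /mapP[x]; rewrite mem_enum inE => /rootP ? ->.
by rewrite map_inj_uniq ?enum_uniq.
Qed.

Section HermitianCurve.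
Variables (F : finFieldType) (q : nat).
Hypotheses (q_pp : prime_power q) (q_gt1 : (1 < q)%N) (card_F : #|F| = (q ^ 2)%N).

Definition frob (x : F) := x ^+ q.
Definition qtrace (x : F) := x + frob x.
Definition qnorm (x : F) := x ^+ q.+1.
Definition Fq := [set x : F | frob x == x].

Lemma frobD x y : frob (x + y) = frob x + frob y.
Proof.
have [p [e [p_pr [e_gt0 q_eq]]]] := q_pp.
have charFp : p \in [pchar F].
  by apply: (@card_finPcharP F p (e * 2)); rewrite // card_F q_eq -expnM.
by apply: exprDn_pchar; rewrite q_eq pnatX pnatE // charFp.
Qed.

Lemma frob0 : frob 0 = 0. Proof. by rewrite /frob expr0n; case: q q_gt1. Qed.
Lemma frobM x y : frob (x * y) = frob x * frob y. Proof. exact: exprMn. Qed.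
Lemma frobN x : frob (- x) = - frob x.
Proof. by apply: (@addrI _ (frob x)); rewrite -frobD !subrr frob0. Qed.
Lemma frobB x y : frob (x - y) = frob x - frob y. Proof. by rewrite frobD frobN. Qed.
Lemma frobK x : frob (frob x) = x.
Proof. by rewrite /frob -exprM mulnn -card_F expf_card. Qed.

Lemma qnormE x : qnorm x = x * frob x. Proof. exact: exprS. Qed.
Lemma frob_qnorm x : frob (qnorm x) = qnorm x.
Proof. by rewrite qnormE frobM frobK mulrC. Qed.
Lemma frob_qtrace x : frob (qtrace x) = qtrace x.
Proof. by rewrite /qtrace frobD frobK addrC. Qed.
Lemma qnorm_eq0 x : (qnorm x == 0) = (x == 0). Proof. exact: expf_eq0. Qed.
Lemma qnorm_Fq x : qnorm x \in Fq. Proof. by rewrite inE frob_qnorm. Qed.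

Lemma card_Fq_le : (#|Fq| <= q)%N.
Proof.
have size_p : size ('X^q - 'X : {poly F}) = q.+1.
  by rewrite size_polyDl ?size_polyXn // size_polyN size_polyX ltnS.
rewrite -ltnS -size_p; apply: (@card_roots_lt_size _ _ id (fun x => frob x == x)) => //.
  by rewrite -size_poly_eq0 size_p.
by move=> x /eqP fix_x; rewrite /root !hornerE -[x ^+ q]/(frob x) fix_x subrr.
Qed.

Lemma qtrace_fibre_le a : (#|[set x | qtrace x == a]| <= q)%N.
Proof.
pose p : {poly F} := 'X^q + ('X - a%:P).
have size_p : size p = q.+1 by rewrite size_polyDl ?size_polyXn ?size_XsubC.
rewrite -ltnS -size_p; apply: (@card_roots_lt_size _ _ id) => //.
  by rewrite -size_poly_eq0 size_p.
move=> x /eqP x_a; rewrite /root hornerD hornerXn hornerXsubC -x_a /qtrace /frob.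
by apply/eqP; ring.
Qed.

Lemma qtrace_uniform : #|Fq| = q /\ {in Fq, forall a, #|[set x | qtrace x == a]| = q}.
Proof.
have [|||||card_Fq fibre_eq] := @uniform_fibers _ _ qtrace [set: F] Fq q q.
- exact: ltnW.
- by move=> x _; rewrite inE frob_qtrace.
- by move=> a _; apply: leq_trans (qtrace_fibre_le a); apply: subset_leq_card;
    apply/subsetP=> x; rewrite !inE.
- exact: card_Fq_le.
- by rewrite cardsT card_F mulnn.
split=> // a /fibre_eq <-; by apply: eq_card => x; rewrite !inE.
Qed.

Lemma card_Fq : #|Fq| = q. Proof. by case: qtrace_uniform. Qed.

Lemma card_qtrace_fibre a : a \in Fq -> #|[set x | qtrace x == a]| = q.
Proof. by case: qtrace_uniform => _; apply. Qed.

Lemma qnorm_fibre_le r : (#|[set x | (x != 0%R) && (qnorm x == r)]| <= q.+1)%N.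
Proof.
pose p : {poly F} := 'X^(q.+1) - r%:P.
have size_p : size p = q.+2 by rewrite size_XnsubC.
rewrite -ltnS -size_p; apply: (@card_roots_lt_size _ _ id) => //.
  by rewrite -size_poly_eq0 size_p.
by move=> x /andP[_ /eqP x_r]; rewrite /root !hornerE -x_r subrr.
Qed.

Lemma card_qnorm_fibre r : r \in Fq -> r != 0 -> #|[set x | qnorm x == r]| = q.+1.
Proof.
move=> rFq r_neq0.
have [||||_ fibre_eq] :=
  @uniform_fibers _ _ qnorm [set~ 0] (Fq :\ 0) q.+1 q.-1 isT.
- by move=> x; rewrite !inE frob_qnorm qnorm_eq0 eqxx andbT.
- move=> b _; apply: leq_trans (qnorm_fibre_le b); apply: subset_leq_card.
  by apply/subsetP=> x; rewrite !inE.
- by have := cardsD1 0 Fq; rewrite card_Fq inE frob0 eqxx => ->.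
- by rewrite cardsC1 card_F; case: q q_gt1 => // n _; rewrite /= expn1; lia.
rewrite -(fibre_eq r) ?in_setD1 ?r_neq0 //.
apply: eq_card => x; rewrite !inE; case: (eqVneq x 0) => // ->.
by rewrite /qnorm expr0n eq_sym (negbTE r_neq0).
Qed.

Lemma pnorm_inf : pnorm ((0 : F), (0 : F), (1 : F)).
Proof. by rewrite /pnorm eqxx /= eqxx. Qed.
Lemma pnorm_aff (p : F * F) : pnorm (1, p.1, p.2).
Proof. by rewrite /pnorm oner_neq0 eqxx. Qed.

Definition point_inf : point F := exist (@pnorm F) _ pnorm_inf.
Definition aff_point (p : F * F) : point F := exist (@pnorm F) _ (pnorm_aff p).
Definition aff_herm := [set p : F * F | qtrace p.2 + qnorm p.1 == 0].

Lemma aff_hermP p : reflect (qtrace p.2 + qnorm p.1 = 0) (p \in aff_herm).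
Proof. by rewrite inE; apply: eqP. Qed.

Lemma aff_point_inj : injective aff_point.
Proof. by case=> a b [c d] /(congr1 val) /= [-> ->]. Qed.

Lemma aff_point_neq_inf p : aff_point p != point_inf.
Proof. by apply/eqP => /(congr1 val) [] /eqP; rewrite oner_eq0. Qed.

Lemma point_cases (P : point F) :
  [\/ P = point_inf, exists p, P = aff_point p | exists c, val P = (0, 1, c)].
Proof.
case: P => [[[a b] c] Pnorm]; have := Pnorm; rewrite /pnorm.
have [a0|a_neq0] /= := eqVneq a 0; last first.
  by move/eqP=> a1; apply: Or32; exists (b, c); apply: val_inj; rewrite /= a1.
have [b0|b_neq0] /= := eqVneq b 0; move/eqP=> e1.
  by apply: Or31; apply: val_inj; rewrite /= a0 b0 e1.
by apply: Or33; exists c; rewrite /= a0 e1.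
Qed.

Lemma inf_in_herm : point_inf \in hermitian_curve F q.
Proof. by rewrite inE /= !expr0n /=; case: q q_gt1 => // n _; rewrite !mulr0 !addr0. Qed.

Lemma aff_point_in_herm p : (aff_point p \in hermitian_curve F q) = (p \in aff_herm).
Proof. by rewrite !inE /= expr1n !mulr1. Qed.

Lemma nonaff_notin_herm (P : point F) c : val P = (0, 1, c) -> P \notin hermitian_curve F q.
Proof.
move=> P_eq; rewrite inE; case: P P_eq => [v Pnorm] /= ->.
rewrite expr0n expr1n.
by case: q q_gt1 => // n _; rewrite /= !mulr0 !add0r oner_eq0.
Qed.

Definition scale3 (l : F) (a : F * F * F) : F * F * F :=
  let: (a0, a1, a2) := a in (l * a0, l * a1, l * a2).

Lemma pnorm_scale_eq x y l :
  pnorm x -> pnorm y -> l != 0 -> y = scale3 l x -> y = x.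
Proof.
case: x => [[x0 x1] x2] x_norm y_norm l_neq0 y_eq; subst y; move: x_norm y_norm.
rewrite /pnorm /=.
have [->|x0_neq0] /= := eqVneq x0 0.
  rewrite mulr0 eqxx /=.
  have [->|x1_neq0] /= := eqVneq x1 0.
    by rewrite mulr0 eqxx /= => /eqP -> /eqP; rewrite mulr1 => ->.
  by move=> /eqP ->; rewrite mulr1 l_neq0 /= => /eqP ->; rewrite !mul1r.
by move=> /eqP ->; rewrite mulr1 l_neq0 /= => /eqP ->; rewrite !mul1r.
Qed.

Definition normalize (a : F * F * F) : F * F * F :=
  let: (a0, a1, a2) := a in
  if a0 != 0 then (1, a1 / a0, a2 / a0)
  else if a1 != 0 then (0, 1, a2 / a1) else (0, 0, 1).

Lemma pnorm_normalize a : pnorm (normalize a).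
Proof.
case: a => [[a0 a1] a2]; rewrite /normalize.
have [_|a0_neq0] /= := eqVneq a0 0; last by rewrite /pnorm oner_neq0 eqxx.
have [_|a1_neq0] /= := eqVneq a1 0; last by rewrite /pnorm eqxx oner_neq0 /= eqxx.
by rewrite /pnorm !eqxx.
Qed.

Lemma normalize_scale a0 a1 a2 : a2 != 0 ->
  exists2 l, l != 0 & normalize (a0, a1, a2) = scale3 l (a0, a1, a2).
Proof.
move=> a2_neq0; rewrite /normalize.
have [a0_0|a0_neq0] /= := eqVneq a0 0; last first.
  by exists a0^-1; rewrite ?invr_eq0 // /scale3 mulVf // ![a0^-1 * _]mulrC.
have [a1_0|a1_neq0] /= := eqVneq a1 0; last first.
  by exists a1^-1; rewrite ?invr_eq0 // /scale3 a0_0 mulr0 mulVf // mulrC.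
by exists a2^-1; rewrite ?invr_eq0 // /scale3 a0_0 a1_0 !mulr0 mulVf.
Qed.

Definition line_inf : line F := exist (@pnorm F) _ (pnorm_aff (0, 0)).
(* The polar line of (1 : x : y) with respect to H_q is [y^q : x^q : 1]. *)
Definition tangent_coords (p : F * F) : F * F * F := (frob p.2, frob p.1, 1).
Definition tangent (p : F * F) : line F :=
  exist (@pnorm F) _ (pnorm_normalize (tangent_coords p)).

Definition dot3 (a x : F * F * F) : F :=
  let: (a0, a1, a2) := a in let: (x0, x1, x2) := x in a0 * x0 + a1 * x1 + a2 * x2.

Lemma incidentE (P : point F) (l : line F) :
  incident P l = (dot3 (val l) (val P) == 0).
Proof. by case: P => [[[x0 x1] x2] P_norm]; case: l => [[[a0 a1] a2] l_norm]. Qed.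

Lemma incident_tangent (P : point F) (p : F * F) :
  incident P (tangent p) = (dot3 (tangent_coords p) (val P) == 0).
Proof.
have [l l_neq0 scale_eq] := normalize_scale (frob p.2) (frob p.1) (oner_neq0 F).
rewrite incidentE; change (val (tangent p)) with (normalize (tangent_coords p)).
rewrite /tangent_coords scale_eq; case: P => [[[x0 x1] x2] _] /=.
by rewrite -!mulrA -!mulrDr mulf_eq0 (negbTE l_neq0).
Qed.

Lemma tangent_meets_herm_once u v a b :
  qtrace v + qnorm u = 0 -> qtrace b + qnorm a = 0 ->
  frob v + frob u * a + b = 0 -> a = u /\ b = v.
Proof.
rewrite /qtrace !qnormE => uv_herm ab_herm on_tangent.
have b_eq : b = - frob v - frob u * a.
  by apply/subr0_eq; rewrite -on_tangent; ring.
have frob_b : frob b = - v - u * frob a by rewrite b_eq frobB frobN frobM !frobK.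
have /eqP : qnorm (a - u) = 0.
  have -> : qnorm (a - u) = (b + frob b + a * frob a) + (v + frob v + u * frob u).
    by rewrite qnormE frobB frob_b b_eq; ring.
  by rewrite ab_herm uv_herm addr0.
rewrite qnorm_eq0 subr_eq0 => /eqP a_u; split=> //.
apply/subr0_eq; rewrite -oppr0 -uv_herm b_eq a_u; ring.
Qed.

Lemma secant_herm_circle u v w al be :
  v = al + be * u -> qtrace v + qnorm u = 0 ->
  qnorm (w + frob be) = qnorm (u + frob be) -> qtrace (al + be * w) + qnorm w = 0.
Proof.
rewrite /qtrace !qnormE !frobD !frobK frobM => v_eq uv_herm same_circle.
have frob_v : frob v = frob al + frob be * frob u by rewrite v_eq frobD frobM.
have -> : al + be * w + (frob al + frob be * frob w) + w * frob w =
  (v + frob v + u * frob u) + ((w + frob be) * (frob w + be) - (u + frob be) * (frob u + be)).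
  by rewrite frob_v v_eq; ring.
by rewrite uv_herm same_circle subrr addr0.
Qed.

Definition circle (c r : F) := [set w | qnorm (w - c) == r].

Lemma card_circle c r : r \in Fq -> r != 0 -> #|circle c r| = q.+1.
Proof.
move=> rFq r_neq0; rewrite -(card_qnorm_fibre rFq r_neq0).
have -> : circle c r = (+%R^~ c) @: [set x | qnorm x == r].
  apply/setP => w; rewrite inE; apply/idP/imsetP.
    by move=> w_circ; exists (w - c); rewrite ?inE // subrK.
  by case=> x; rewrite inE => x_r ->; rewrite addrK.
exact/card_imset/addIr.
Qed.

Lemma circle_qtrace_fibre_le c r a :
  (#|[set w | (w \in circle c r) && (qtrace w == a)]| <= 2)%N.
Proof.
(* z = w - c is a root of X^2 - qtrace z X + qnorm z, and qtrace z = a - qtrace c. *)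
pose p : {poly F} := 'X^2 + ((qtrace c - a) *: 'X + r%:P).
have size_p : size p = 3%N.
  rewrite size_polyDl ?size_polyXn //.
  apply: leq_ltn_trans (size_polyD _ _) _; rewrite gtn_max.
  apply/andP; split; last exact: leq_ltn_trans (size_polyC_leq1 _) _.
  by apply: leq_ltn_trans (size_scale_leq _ _) _; rewrite size_polyX.
rewrite -ltnS -size_p; apply: (@card_roots_lt_size _ _ (+%R^~ (- c))).
- exact: addIr.
- by rewrite -size_poly_eq0 size_p.
move=> w /andP[]; rewrite inE => /eqP norm_r /eqP trace_a.
rewrite /root hornerD hornerXn hornerD hornerZ hornerX hornerC -norm_r -trace_a.
by rewrite qnormE /qtrace frobB; apply/eqP; ring.
Qed.

Lemma circle_qtrace_preim_le c r (L : {set F}) :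
  (#|circle c r :&: qtrace @^-1: L| <= 2 * #|L|)%N.
Proof.
rewrite (@card_fibers _ _ qtrace (circle c r :&: qtrace @^-1: L) L); last first.
  by move=> x /setIP[_]; rewrite inE.
rewrite mulnC -sum_nat_const; apply: leq_sum => a _.
apply: leq_trans (circle_qtrace_fibre_le c r a); apply: subset_leq_card.
by apply/subsetP => x; rewrite !inE => /andP[/andP[-> _] ->].
Qed.

Lemma tangent_eq (l : line F) p c :
  c != 0 -> val l = scale3 c (tangent_coords p) -> l = tangent p.
Proof.
move=> c_neq0 l_eq.
have [mu mu_neq0 tangent_eq] := normalize_scale (frob p.2) (frob p.1) (oner_neq0 F).
apply: val_inj; apply: (@pnorm_scale_eq _ _ (c / mu)).
- exact: pnorm_normalize.
- exact: valP.
- by rewrite mulf_neq0 ?invr_eq0.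
rewrite l_eq; change (val (tangent p)) with (normalize (tangent_coords p)).
by rewrite /tangent_coords tangent_eq /=; congr (_, _, _); field.
Qed.

Lemma aff_point_on_line (l : line F) a0 a1 a2 w :
  val l = (a0, a1, a2) -> a2 != 0 ->
  incident (aff_point (w, - a0 / a2 + - a1 / a2 * w)) l.
Proof. by move=> l_eq a2_neq0; rewrite incidentE l_eq /=; apply/eqP; field. Qed.

Section Criterion.
Variables (W : {set F}) (Sp : {set F * F}) (with_inf : bool).
Hypothesis circle_W : forall c r, r \in Fq -> r != 0 -> (#|circle c r :&: W| <= q.-1)%N.
Hypothesis Sp_herm : Sp \subset aff_herm.
Hypothesis Sp_off_W : {in aff_herm, forall p, p.1 \notin W -> p \in Sp}.
Hypothesis Sp_paired : ~~ with_inf ->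
  {in Sp, forall p, exists p', [/\ p' \in Sp, p' != p & p'.1 = p.1]}.
Hypothesis Sp_covers : with_inf -> forall u, exists2 p, p \in Sp & p.1 = u.

Definition herm_part : {set point F} :=
  (if with_inf then [set point_inf] else set0) :|: aff_point @: Sp.

Lemma mem_herm_part_aff p : (aff_point p \in herm_part) = (p \in Sp).
Proof.
rewrite /herm_part inE mem_imset; last exact: aff_point_inj.
by case: with_inf; rewrite ?inE ?(negbTE (aff_point_neq_inf p)).
Qed.

Lemma mem_herm_part_inf : (point_inf \in herm_part) = with_inf.
Proof.
rewrite /herm_part inE; have -> : (point_inf \in aff_point @: Sp) = false.
  by apply/negbTE/imsetP => [[p _ /eqP]]; rewrite eq_sym (negbTE (aff_point_neq_inf p)).
by case: with_inf; rewrite ?inE ?eqxx.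
Qed.

Lemma herm_part_sub : herm_part \subset hermitian_curve F q.
Proof.
apply/subsetP => Q; rewrite /herm_part inE; case/orP.
  by case: with_inf; rewrite ?in_set1 ?in_set0 // => /eqP ->; exact: inf_in_herm.
by case/imsetP => p p_Sp ->; rewrite aff_point_in_herm; exact: (subsetP Sp_herm).
Qed.

Lemma nonaff_notin_herm_part (Q : point F) c : val Q = (0, 1, c) -> Q \notin herm_part.
Proof. by move=> Q_eq; apply: contra (nonaff_notin_herm Q_eq); apply/subsetP/herm_part_sub. Qed.

Lemma herm_part_cases Q : Q \in herm_part ->
  (Q = point_inf /\ with_inf) \/ exists2 p, p \in Sp & Q = aff_point p.
Proof.
case: (point_cases Q) => [->|[p ->]|[c Q_eq]].
- by rewrite mem_herm_part_inf; left.
- by rewrite mem_herm_part_aff; right; exists p.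
- by rewrite (negbTE (nonaff_notin_herm_part Q_eq)).
Qed.

Lemma unique_tangent_inf : with_inf ->
  exists! l : line F, herm_part :&: line_pts l = [set point_inf].
Proof.
move=> inf_S; exists line_inf; split.
  apply/setP => Q; rewrite in_setI in_set1 [Q \in line_pts _]inE.
  case: (point_cases Q) => [->|[p ->]|[c Q_eq]].
  - by rewrite mem_herm_part_inf inf_S eqxx /incident /= !(mulr0, mul0r, addr0) eqxx.
  - rewrite mem_herm_part_aff (negbTE (aff_point_neq_inf p)) andbC /incident /=.
    by rewrite !(mul1r, mul0r, addr0) oner_eq0.
  - rewrite (negbTE (nonaff_notin_herm_part Q_eq)).
    apply/esym/negbTE/eqP => Q_inf; move: Q_eq; rewrite Q_inf /= => [[]] /eqP.
    by rewrite eq_sym oner_eq0.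
case=> [[[a0 a1] a2] l_norm] only_inf.
have inf_l : point_inf \in herm_part :&: line_pts (exist (@pnorm F) _ l_norm).
  by rewrite only_inf set11.
have a2_0 : a2 = 0 by move: inf_l; rewrite !inE /incident /= !mulr0 !add0r mulr1 => /andP[_ /eqP].
have [a1_0|a1_neq0] := eqVneq a1 0.
  apply: val_inj => /=; move: (l_norm); rewrite /pnorm a1_0 a2_0 eqxx /=.
  by case: (eqVneq a0 0) => [->|_ /eqP ->] //=; rewrite eq_sym oner_eq0.
have [p p_Sp p_1] := Sp_covers inf_S (- a0 / a1).
suff : aff_point p \in herm_part :&: line_pts (exist (@pnorm F) _ l_norm).
  by rewrite only_inf in_set1 (negbTE (aff_point_neq_inf p)).
rewrite in_setI mem_herm_part_aff p_Sp inE /incident /= p_1 a2_0 mul0r addr0 mulr1.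
by apply/eqP; field.
Qed.

Lemma tangent_meets_herm_part p : p \in Sp ->
  herm_part :&: line_pts (tangent p) = [set aff_point p].
Proof.
move=> p_Sp; have /aff_hermP p_herm := subsetP Sp_herm p p_Sp.
apply/setP => Q; rewrite in_setI in_set1 [Q \in line_pts _]inE incident_tangent.
case: (point_cases Q) => [->|[p' ->]|[c Q_eq]].
- rewrite /tangent_coords /= !mulr0 !add0r mulr1 oner_eq0 andbF.
  by rewrite eq_sym (negbTE (aff_point_neq_inf p)).
- rewrite mem_herm_part_aff (inj_eq aff_point_inj).
  have [->|p'_neq_p] := eqVneq p' p.
    by rewrite p_Sp /= -p_herm /qtrace qnormE; apply/eqP; ring.
  apply/negbTE/andP => [[p'_Sp /eqP p'_tangent]].
  have /aff_hermP p'_herm := subsetP Sp_herm p' p'_Sp.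
  rewrite /= mulr1 mul1r in p'_tangent.
  have [e1 e2] := tangent_meets_herm_once p_herm p'_herm p'_tangent.
  by move: p'_neq_p; rewrite [p']surjective_pairing e1 e2 -surjective_pairing eqxx.
- rewrite (negbTE (nonaff_notin_herm_part Q_eq)).
  by apply/esym/negbTE/eqP => Q_p; move: Q_eq; rewrite Q_p => [[]] /eqP; rewrite oner_eq0.
Qed.

Lemma vertical_second_point p (l : line F) a0 a1 :
  p \in Sp -> val l = (a0, a1, 0) -> incident (aff_point p) l ->
  exists2 Q, Q \in herm_part & (Q != aff_point p) && incident Q l.
Proof.
move=> p_Sp l_eq; rewrite incidentE l_eq /= => /eqP p_l.
case: (boolP with_inf) => [inf_S|fin_S].
  exists point_inf; first by rewrite mem_herm_part_inf.
  by rewrite eq_sym aff_point_neq_inf incidentE l_eq /= !mulr0 mul0r !addr0.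
have [p' [p'_Sp p'_neq p'_1]] := Sp_paired fin_S p_Sp.
exists (aff_point p'); first by rewrite mem_herm_part_aff.
by rewrite (inj_eq aff_point_inj) p'_neq incidentE l_eq /= p'_1 !mul0r !addr0 -p_l mul0r addr0.
Qed.

Lemma secant_second_point p (l : line F) a0 a1 a2 :
  p \in Sp -> val l = (a0, a1, a2) -> incident (aff_point p) l -> a2 != 0 ->
  qnorm (p.1 + frob (- a1 / a2)) != 0 ->
  exists2 Q, Q \in herm_part & (Q != aff_point p) && incident Q l.
Proof.
move=> p_Sp l_eq p_l a2_neq0 r_neq0.
set be := - a1 / a2; set al := - a0 / a2; set r := qnorm _ in r_neq0.
have /aff_hermP p_herm := subsetP Sp_herm p p_Sp.
have p2_eq : p.2 = al + be * p.1.
  move: p_l; rewrite incidentE l_eq /= => /eqP p_l.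
  by apply: (mulfI a2_neq0); rewrite /al /be; apply/subr0_eq; rewrite -p_l; field.
have [w w_circ w_neq] : exists2 w, w \in circle (- frob be) r :\: W & w != p.1.
  have rFq : r \in Fq := qnorm_Fq _.
  apply: exists_neq; have := cardsID W (circle (- frob be) r).
  rewrite card_circle //; have := circle_W (- frob be) rFq r_neq0.
  by move: #|_ :&: W| #|_ :\: W| => m n; lia.
move: w_circ; rewrite !inE opprK => /andP[w_W /eqP w_r].
exists (aff_point (w, al + be * w)).
  rewrite mem_herm_part_aff; apply: Sp_off_W => //.
  by apply/aff_hermP; apply: secant_herm_circle p2_eq p_herm w_r.
rewrite (inj_eq aff_point_inj) aff_point_on_line // andbT.
by apply: contra_neq w_neq => <-.
Qed.

Lemma second_point p (l : line F) :
  p \in Sp -> incident (aff_point p) l -> l != tangent p ->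
  exists2 Q, Q \in herm_part & (Q != aff_point p) && incident Q l.
Proof.
move=> p_Sp p_l l_neq; case l_eq: (val l) => [[a0 a1] a2].
have [a2_0|a2_neq0] := eqVneq a2 0.
  by apply: vertical_second_point p_Sp _ p_l; rewrite l_eq a2_0.
have [r_0|] := eqVneq (qnorm (p.1 + frob (- a1 / a2))) 0; last first.
  exact: secant_second_point l_eq p_l a2_neq0.
case/eqP: l_neq; apply: (tangent_eq a2_neq0); rewrite l_eq /tangent_coords /=.
have /aff_hermP := subsetP Sp_herm p p_Sp; rewrite /qtrace qnormE => p_herm.
move: p_l; rewrite incidentE l_eq /= mulr1 => /eqP p_l.
move/eqP: r_0; rewrite qnorm_eq0 => /eqP/(congr1 frob); rewrite frobD frobK frob0 => fp1.
have a1_eq : a1 = a2 * frob p.1.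
  by apply/subr0_eq; rewrite -(mulr0 (- a2)) -fp1; field.
have fp2 : frob p.2 = - (p.2 + p.1 * frob p.1).
  by apply/subr0_eq; rewrite -p_herm; ring.
congr (_, _, _); rewrite ?mulr1 //.
by apply/subr0_eq; rewrite -p_l fp2 a1_eq; ring.
Qed.

Lemma unique_tangent_aff p : p \in Sp ->
  exists! l : line F, herm_part :&: line_pts l = [set aff_point p].
Proof.
move=> p_Sp; exists (tangent p); split; first exact: tangent_meets_herm_part.
move=> l only_p; case: (eqVneq l (tangent p)) => [->//|l_neq]; exfalso.
have p_l : incident (aff_point p) l.
  by move: (set11 (aff_point p)); rewrite -only_p !inE => /andP[].
have [Q Q_S /andP[Q_neq Q_l]] := second_point p_Sp p_l l_neq.
by move: Q_neq; rewrite -in_set1 -only_p in_setI Q_S inE Q_l.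
Qed.

Lemma herm_part_semioval : with_inf || (Sp != set0) -> semioval herm_part.
Proof.
move=> nonempty; split.
  case/orP: nonempty => [inf_S|/set0Pn[p p_Sp]]; apply/set0Pn.
    by exists point_inf; rewrite mem_herm_part_inf.
  by exists (aff_point p); rewrite mem_herm_part_aff.
move=> P /herm_part_cases [[-> inf_S]|[p p_Sp ->]].
  exact: unique_tangent_inf.
exact: unique_tangent_aff.
Qed.

End Criterion.

Definition herm_column (u : F) := [set p in aff_herm | p.1 == u].

Lemma card_herm_column u : #|herm_column u| = q.
Proof.
have -> : herm_column u = pair u @: [set x | qtrace x == - qnorm u].
  apply/setP => [[a b]]; rewrite !inE /=; apply/andP/imsetP.
    by case=> ab_herm /eqP a_u; exists b; rewrite ?a_u // inE -addr_eq0 -a_u.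
  by case=> x; rewrite inE => /eqP x_tr [-> ->]; rewrite x_tr addNr.
rewrite card_imset; last by move=> x y [].
by apply: card_qtrace_fibre; rewrite inE frobN frob_qnorm.
Qed.

Lemma card_herm_over (X : {set F}) : #|[set p in aff_herm | p.1 \in X]| = (q * #|X|)%N.
Proof.
rewrite (@card_fibers _ _ fst _ X); last by move=> p; rewrite inE => /andP[].
rewrite mulnC -sum_nat_const; apply: eq_bigr => u u_X.
rewrite -(card_herm_column u); apply: eq_card => p; rewrite !inE.
by case: (eqVneq p.1 u) => [->|]; rewrite ?u_X ?andbT ?andbF.
Qed.

Lemma card_aff_herm : #|aff_herm| = (q ^ 3)%N.
Proof.
have -> : aff_herm = [set p in aff_herm | p.1 \in [set: F]].
  by apply/setP => p; rewrite !inE andbT.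
by rewrite card_herm_over cardsT card_F expnS.
Qed.

Lemma card_qtrace_preim (L : {set F}) : L \subset Fq -> #|qtrace @^-1: L| = (q * #|L|)%N.
Proof.
move=> L_Fq; rewrite (@card_fibers _ _ qtrace (qtrace @^-1: L) L); last first.
  by move=> x; rewrite inE.
rewrite mulnC -sum_nat_const; apply: eq_bigr => a a_L.
rewrite -(card_qtrace_fibre (subsetP L_Fq a a_L)); apply: eq_card => x; rewrite !inE.
by case: (eqVneq (qtrace x) a) => [->|]; rewrite ?a_L ?andbF.
Qed.

Lemma semioval_whole_curve : exists S : {set point F},
  [/\ semioval S, S \subset hermitian_curve F q & #|S| = (q ^ 3 + 1)%N].
Proof.
have circle_W c r (_ : r \in Fq) (_ : r != 0) : (#|circle c r :&: set0| <= q.-1)%N.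
  by rewrite setI0 cards0.
have covers u : exists2 p, p \in aff_herm & p.1 = u.
  have /card_gt0P[p] : (0 < #|herm_column u|)%N by rewrite card_herm_column ltnW.
  by rewrite inE => /andP[p_herm /eqP p_u]; exists p.
exists (herm_part aff_herm true); split.
- exact: (herm_part_semioval circle_W (subxx _) (fun p p_herm _ => p_herm) _ (fun=> covers)).
- exact: herm_part_sub.
rewrite /herm_part cardsU1 card_imset ?card_aff_herm; last exact: aff_point_inj.
suff -> : point_inf \notin aff_point @: aff_herm by rewrite addnC.
by apply/imsetP => [[p _ /eqP]]; rewrite eq_sym (negbTE (aff_point_neq_inf p)).
Qed.

Lemma semioval_of_removal (W : {set F}) (E : {set F * F}) :
  (forall c r, r \in Fq -> r != 0%R -> #|circle c r :&: W| <= q.-1)%N ->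
  E \subset aff_herm -> {in E, forall p, p.1 \in W} ->
  {in aff_herm :\: E, forall p, 1 < #|herm_column p.1 :\: E|}%N ->
  (#|E| < q ^ 3)%N ->
  exists S : {set point F},
    [/\ semioval S, S \subset hermitian_curve F q & #|S| = (q ^ 3 - #|E|)%N].
Proof.
move=> circle_W E_herm E_W columns_gt1 card_E.
have card_Sp : #|aff_herm :\: E| = (q ^ 3 - #|E|)%N.
  by rewrite cardsD card_aff_herm (setIidPr E_herm).
have off_W : {in aff_herm, forall p, p.1 \notin W -> p \in aff_herm :\: E}.
  by move=> p p_herm p_W; rewrite inE p_herm andbT; apply: contra p_W; apply: E_W.
have paired p : p \in aff_herm :\: E ->
    exists p', [/\ p' \in aff_herm :\: E, p' != p & p'.1 = p.1].
  move=> p_Sp; have [p' p'_col p'_neq] := exists_neq p (columns_gt1 p p_Sp).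
  move: p'_col; rewrite !inE => /andP[p'_E /andP[p'_herm /eqP p'_1]].
  by exists p'; split; rewrite // !inE p'_E p'_herm.
exists (herm_part (aff_herm :\: E) false); split.
- apply: (herm_part_semioval circle_W (subsetDl _ _) off_W (fun=> paired)) => //.
  by rewrite /= -card_gt0 card_Sp subn_gt0.
- exact/herm_part_sub/subsetDl.
by rewrite /herm_part set0U card_imset ?card_Sp //; exact: aff_point_inj.
Qed.

Lemma sub_herm_columnP (A : {set F * F}) u p :
  A \subset herm_column u -> p \in A -> p \in aff_herm /\ p.1 = u.
Proof. by move=> A_col /(subsetP A_col); rewrite inE => /andP[? /eqP]. Qed.

Section Removal.
Variables (Wf : {set F}) (w1 w2 : F) (A1 A2 : {set F * F}).
Hypotheses (w1_Wf : w1 \notin Wf) (w2_Wf : w2 \notin Wf) (w2_neq : w2 != w1).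
Hypotheses (A1_col : A1 \subset herm_column w1) (A2_col : A2 \subset herm_column w2).

Definition removed := [set p in aff_herm | p.1 \in Wf] :|: A1 :|: A2.

Lemma removed_sub : removed \subset aff_herm.
Proof.
apply/subsetP => p /setUP[/setUP[|/(sub_herm_columnP A1_col)[]//]|].
  by rewrite inE => /andP[].
by case/(sub_herm_columnP A2_col).
Qed.

Lemma removed_fst p : p \in removed -> [|| p.1 \in Wf, p.1 == w1 | p.1 == w2].
Proof.
case/setUP=> [/setUP[|/(sub_herm_columnP A1_col)[_ ->]]|/(sub_herm_columnP A2_col)[_ ->]].
- by rewrite inE => /andP[_ ->].
- by rewrite eqxx orbT.
by rewrite eqxx !orbT.
Qed.

Lemma card_removed : #|removed| = (q * #|Wf| + #|A1| + #|A2|)%N.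
Proof.
rewrite !cardsU_disjoint ?card_herm_over //.
- move=> p; rewrite inE => /andP[_ p_Wf]; apply/negP => /(sub_herm_columnP A1_col)[_ p_1].
  by move: w1_Wf; rewrite -p_1 p_Wf.
move=> p p_X_A1; apply/negP => /(sub_herm_columnP A2_col)[_ p_2].
case/setUP: p_X_A1 => [|/(sub_herm_columnP A1_col)[_ p_1]].
  by rewrite inE p_2 (negbTE w2_Wf) andbF.
by move: w2_neq; rewrite -p_1 -p_2 eqxx.
Qed.

Lemma removed_columns_gt1 : (#|A1| <= q - 2)%N -> (#|A2| <= q - 2)%N ->
  {in aff_herm :\: removed, forall p, 1 < #|herm_column p.1 :\: removed|}%N.
Proof.
move=> A1_small A2_small p /setDP[p_herm p_E].
have p_Wf : p.1 \notin Wf.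
  by apply: contra p_E => p_Wf; rewrite !in_setU inE p_herm p_Wf.
have col_E : herm_column p.1 :&: removed \subset if p.1 == w1 then A1 else A2.
  apply/subsetP => x /setIP[]; rewrite inE => /andP[_ /eqP x_1].
  case/setUP=> [/setUP[|x_A1]|x_A2].
  - by rewrite inE x_1 (negbTE p_Wf) andbF.
  - by have [_ x_w1] := sub_herm_columnP A1_col x_A1; rewrite -x_1 x_w1 eqxx.
  - by have [_ x_w2] := sub_herm_columnP A2_col x_A2; rewrite -x_1 x_w2 (negbTE w2_neq).
have col_small : (#|herm_column p.1 :&: removed| <= q - 2)%N.
  by apply: leq_trans (subset_leq_card col_E) _; case: eqP.
have := cardsID removed (herm_column p.1); rewrite card_herm_column.
by move: col_small; move: #|_ :&: _| #|_ :\: _| => m n; clear -q_gt1; lia.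
Qed.

End Removal.

Lemma removable_set (W : {set F}) e : (2 < q)%N -> (e %/ q + 2 <= #|W|)%N ->
  exists E : {set F * F},
    [/\ E \subset aff_herm, #|E| = e, {in E, forall p, p.1 \in W}
      & {in aff_herm :\: E, forall p, 1 < #|herm_column p.1 :\: E|}%N].
Proof.
move=> q_gt2 card_W; set r := (e %% q)%N.
have [Wf Wf_W card_Wf] := @exists_subset_card _ W (e %/ q) (leq_trans (leq_addr 2 _) card_W).
have W_Wf_gt1 : (1 < #|W :\: Wf|)%N by rewrite cardsD (setIidPr Wf_W) card_Wf; lia.
have [w1 w1_in _] := exists_neq 0 W_Wf_gt1.
have [w2 w2_in w2_neq] := exists_neq w1 W_Wf_gt1.
move: w1_in w2_in; rewrite !inE => /andP[w1_Wf w1_W] /andP[w2_Wf w2_W].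
have r_lt : (r < q)%N by rewrite ltn_pmod // ltnW.
(* The remainder r < q is split as minn r (q - 2) + (r - minn r (q - 2)) so that no
   partially emptied column keeps fewer than two points. *)
have A1_le : (minn r (q - 2) <= #|herm_column w1|)%N.
  by rewrite card_herm_column; lia.
have A2_le : (r - minn r (q - 2) <= #|herm_column w2|)%N.
  by rewrite card_herm_column; lia.
have [A1 A1_col card_A1] := exists_subset_card A1_le.
have [A2 A2_col card_A2] := exists_subset_card A2_le.
exists (removed Wf A1 A2); split.
- exact: removed_sub A1_col A2_col.
- rewrite (card_removed w1_Wf w2_Wf w2_neq A1_col A2_col) card_Wf card_A1 card_A2.
  by rewrite -addnA subnKC ?geq_minl // mulnC -divn_eq.
- move=> p /(removed_fst A1_col A2_col).
  by case/or3P => [/(subsetP Wf_W)|/eqP->|/eqP->].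
apply: (removed_columns_gt1 w2_neq A1_col A2_col); first by rewrite card_A1 geq_minr.
by rewrite card_A2; clear -q_gt2 r_lt; lia.
Qed.

Lemma semioval_removing e : (2 < q)%N -> (e %/ q + 2 <= q * (q.-1)./2)%N ->
  exists S : {set point F},
    [/\ semioval S, S \subset hermitian_curve F q & #|S| = (q ^ 3 - e)%N].
Proof.
move=> q_gt2 e_small.
have half_le : ((q.-1)./2 <= q)%N by rewrite leq_half_double; lia.
have [L L_Fq card_L] : exists2 L : {set F}, L \subset Fq & #|L| = (q.-1)./2.
  by apply: exists_subset_card; rewrite card_Fq.
have circle_W c r (_ : r \in Fq) (_ : r != 0) : (#|circle c r :&: qtrace @^-1: L| <= q.-1)%N.
  apply: leq_trans (circle_qtrace_preim_le c r L) _.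
  by rewrite card_L -[X in (_ <= X)%N](odd_double_half q.-1) mul2n leq_addl.
have card_W : #|qtrace @^-1: L| = (q * (q.-1)./2)%N by rewrite card_qtrace_preim // card_L.
have W_big : (e %/ q + 2 <= #|qtrace @^-1: L|)%N by rewrite card_W.
have [E [E_herm card_E E_W columns]] := removable_set q_gt2 W_big.
have e_lt : (e < q ^ 3)%N.
  have qh : (q * (q.-1)./2 <= q ^ 2)%N by rewrite -mulnn leq_mul2l half_le orbT.
  have : (e %/ q < q ^ 2)%N by move: e_small qh; move: (_ %/ q)%N (q * _)%N => x y; lia.
  by rewrite ltn_divLR -?expnSr // ltnW.
rewrite -card_E; apply: semioval_of_removal circle_W E_herm E_W columns _.
by rewrite card_E.
Qed.

End HermitianCurve.

Local Close Scope ring_scope.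
Lemma removal_bound q k : 2 < q -> k <= q ^ 3 ->
  (if odd q then (q ^ 3 + 2 * q ^ 2 - q + 2) %/ 2 <= k
   else (q ^ 3 + 3 * q ^ 2 - 2 * q + 2) %/ 2 <= k) ->
  (q ^ 3 - k) %/ q + 2 <= q * (q.-1)./2.
Proof.
move=> q_gt2 k_le k_ge; have q_gt0 : 0 < q by apply: ltnW (ltnW q_gt2).
suff lt_k : q ^ 3 - k < q * (q * (q.-1)./2 - 1).
  by move: lt_k; rewrite mulnC -ltn_divLR //; move: (_ %/ q) (q * _) => x y; lia.
have := odd_double_half q; case: (odd q) k_ge => /= k_ge q_eq.
all: rewrite -{}q_eq -mul2n in q_gt2 k_le k_ge *; set t := q./2 in q_gt2 k_le k_ge *.
- have {}k_ge : 4 * t ^ 3 + 10 * t ^ 2 + 6 * t + 2 <= k.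
    move: k_ge; rewrite (_ : _ + 2 = 2 * (4 * t ^ 3 + 10 * t ^ 2 + 6 * t + 2)) ?mulKn //.
    by rewrite !expnS !expn0; nia.
  rewrite add1n /= mul2n doubleK -mul2n; rewrite !expnS !expn0 in k_le *; nia.
have {}k_ge : 4 * t ^ 3 + 6 * t ^ 2 - 2 * t + 1 <= k.
  move: k_ge; rewrite (_ : _ + 2 = 2 * (4 * t ^ 3 + 6 * t ^ 2 - 2 * t + 1)) ?mulKn //.
  by rewrite !expnS !expn0; nia.
rewrite add0n (_ : (2 * t).-1./2 = t.-1); last first.
  by case: t {k_le k_ge} q_gt2 => // t' _; rewrite mul2n doubleS /= uphalf_double.
rewrite !expnS !expn0 in k_le *; nia.
Qed.

Theorem mainTheorem5 (q : nat) (F : finFieldType) :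
  prime_power q -> (2 < q)%N -> #|F| = (q ^ 2)%N ->
  forall k : nat,
    (k <= q ^ 3 + 1)%N ->
    (if odd q then ((q ^ 3 + 2 * q ^ 2 - q + 2) %/ 2 <= k)%N
     else ((q ^ 3 + 3 * q ^ 2 - 2 * q + 2) %/ 2 <= k)%N) ->
    exists S : {set point F},
      semioval S /\ S \subset hermitian_curve F q /\ #|S| = k.
Proof.
move=> q_pp q_gt2 card_F k k_le k_ge; have q_gt1 := ltnW q_gt2.
have [->|k_neq] := eqVneq k (q ^ 3 + 1).
  by have [S [? ? ?]] := semioval_whole_curve q_pp q_gt1 card_F; exists S.
have k_le3 : k <= q ^ 3 by move: k_le k_neq; move: (q ^ 3) => n; lia.
have [S [? ? card_S]] :=
  semioval_removing q_pp q_gt1 card_F q_gt2 (removal_bound q_gt2 k_le3 k_ge).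
by exists S; rewrite card_S subKn.
Qed.
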